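(* Let $T\ge1$ and let $p$ be a $T$-period random joint choice rule on a finite set $X$. Then $p$ is consistent with state independent consumption dependent random utility if and only if it satisfies marginality, complete monotonicity, and choice set independence.
   Context: $\mathcal{X}$ is the set of nonempty subsets of $X$, $\mathcal{L}(X)$ the linear orders, $N(x,A)=\{\succ: x\succ y\ \forall y\in A\setminus\{x\}\}$. Notation: $\mathbf{x}^\tau=(x_1,\dots,x_\tau)$, $\mathbf{A}^\tau=(A_1,\dots,A_\tau)\in\mathcal{X}^\tau$, and $\mathbf{x}^\tau\in\mathbf{A}^\tau$ means $x_i\in A_i$ for all $i$. A $T$-period random joint choice rule assigns to each $\mathbf{A}^T\in\mathcal{X}^T$ and $\mathbf{x}^T\in\mathbf{A}^T$ a number $p(\mathbf{x}^T,\mathbf{A}^T)\ge0$ with $\sum_{\mathbf{x}^T\in\mathbf{A}^T}p(\mathbf{x}^T,\mathbf{A}^T)=1$. For $\tau<T$ define recursively $p(\mathbf{x}^\tau,\mathbf{A}^\tau)=\sum_{y\in X}p(\mathbf{x}^\tau,y,\mathbf{A}^\tau,X)$. Marginality: for all $\tau\in\{1,\dots,T-1\}$, $\mathbf{A}^\tau$, $\mathbf{x}^\tau\in\mathbf{A}^\tau$, $B,C\in\mathcal{X}$: $\sum_{y\in B}p(\mathbf{x}^\tau,y,\mathbf{A}^\tau,B)=\sum_{y\in C}p(\mathbf{x}^\tau,y,\mathbf{A}^\tau,C)$. The Möbius inverse $q$ is defined by $p(\mathbf{x}^T,\mathbf{A}^T)=\sum_{A_1\subseteq A_1'\subseteq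 X}\cdots\sum_{A_T\subseteq A_T'\subseteq X}q(\mathbf{x}^T,A_1',\dots,A_T')$; complete monotonicity means $q\ge0$ everywhere. Choice set independence: for each $\tau\in\{1,\dots,T-1\}$, each $B\in\mathcal{X}$ and $y\in B$, and each $\mathbf{A}^\tau,\mathbf{A}'^\tau$ with $\mathbf{x}^\tau\in\mathbf{A}^\tau\cap\mathbf{A}'^\tau$, $p(\mathbf{x}^\tau,\mathbf{A}^\tau)>0$, $p(\mathbf{x}^\tau,\mathbf{A}'^\tau)>0$: $\frac{p(\mathbf{x}^\tau,y,\mathbf{A}^\tau,B)}{p(\mathbf{x}^\tau,\mathbf{A}^\tau)}=\frac{p(\mathbf{x}^\tau,y,\mathbf{A}'^\tau,B)}{p(\mathbf{x}^\tau,\mathbf{A}'^\tau)}$. A state independent transition function of degree $n$ is a map $t^n:X^n\to\Delta(\mathcal{L}(X))$, with $t^n_{\succ'}(\cdot)$ the probability of $\succ'$. $p$ is consistent with state independent consumption dependent random utility if there exist $\nu\in\Delta(\mathcal{L}(X))$ and state independent transition functions $t^1,\dots,t^{T-1}$ ($t^n$ of degree $n$) with $p(\mathbf{x}^T,\mathbf{A}^T)=\sum_{\succ_1\in N(x_1,A_1)}\cdots\sum_{\succ_T\in N(x_T,A_T)}\nu(\succ_1)\prod_{\tau=2}^T t^{\tau-1}_{\succ_\tau}(\mathbf{x}^{\tau-1})$ for all $\mathbf{A}^T$, $\mathbf{x}^T\in\mathbf{A}^T$. *)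

From HB Require Import structures.
From mathcomp Require Import all_boot all_order all_algebra.
From mathcomp Require Import reals.
Set Implicit Arguments.
Unset Strict Implicit.
Unset Printing Implicit Defensive.
Import Order.TTheory GRing.Theory Num.Theory.
Local Open Scope ring_scope.

(* Linear orders on a finite set X, encoded as rankings: an injective (hence
   bijective) map f : X -> 'I_#|X|; x is preferred to y iff f x < f y.
   This is a bijective encoding of L(X). *)
Definition linord (X : finType) := {f : {ffun X -> 'I_#|X|} | injectiveb f}.

Definition prefers (X : finType) (o : linord X) (x y : X) : bool :=
  (val o x < val o y)%N.

Definition inN (X : finType) (o : linord X) (x : X) (A : {set X}) : bool :=
  [forall y in A, (y != x) ==> prefers o x y].

Definition in_dom (X : finType) (n : nat) (xs : seq X) (As : seq {set X}) : bool :=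
  [&& size xs == n, size As == n, all (fun A => A != set0) As
    & all2 (fun (x : X) (A : {set X}) => x \in A) xs As].

(* T-period random joint choice rule (p is only meaningful on sequences of length T) *)
Definition is_rjcr (R : realType) (X : finType) (T : nat)
    (p : seq X -> seq {set X} -> R) : Prop :=
  (forall xs As, in_dom T xs As -> 0 <= p xs As) /\
  (forall As : seq {set X}, size As = T -> all (fun A => A != set0) As ->
     \sum_(xs : T.-tuple X | all2 (fun (x : X) (A : {set X}) => x \in A) xs As) p xs As = 1).

Fixpoint pext (R : realType) (X : finType) (p : seq X -> seq {set X} -> R)
    (k : nat) (xs : seq X) (As : seq {set X}) : R :=
  match k with
  | 0 => p xs As
  | k'.+1 => \sum_(y : X) pext p k' (rcons xs y) (rcons As setT)
  end.

(* p(x^tau, A^tau) for tau <= T *)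
Definition pmarg (R : realType) (X : finType) (p : seq X -> seq {set X} -> R)
    (T tau : nat) (xs : seq X) (As : seq {set X}) : R :=
  pext p (T - tau) xs As.

Definition marginality (R : realType) (X : finType) (T : nat)
    (p : seq X -> seq {set X} -> R) : Prop :=
  forall tau : nat, (1 <= tau <= T - 1)%N ->
  forall (xs : seq X) (As : seq {set X}), in_dom tau xs As ->
  forall B C : {set X}, B != set0 -> C != set0 ->
    \sum_(y in B) pmarg p T tau.+1 (rcons xs y) (rcons As B)
    = \sum_(y in C) pmarg p T tau.+1 (rcons xs y) (rcons As C).

Definition complete_monotonicity (R : realType) (X : finType) (T : nat)
    (p : seq X -> seq {set X} -> R) : Prop :=
  exists q : seq X -> seq {set X} -> R,
    (forall xs As, in_dom T xs As ->
       p xs As = \sum_(Bs : T.-tuple {set X} | all2 (fun A B : {set X} => A \subset B) As Bs)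
                   q xs Bs) /\
    (forall xs As, in_dom T xs As -> 0 <= q xs As).

Definition choice_set_independence (R : realType) (X : finType) (T : nat)
    (p : seq X -> seq {set X} -> R) : Prop :=
  forall tau : nat, (1 <= tau <= T - 1)%N ->
  forall (B : {set X}) (y : X), y \in B ->
  forall (xs : seq X) (As As' : seq {set X}),
    in_dom tau xs As -> in_dom tau xs As' ->
    0 < pmarg p T tau xs As -> 0 < pmarg p T tau xs As' ->
    pmarg p T tau.+1 (rcons xs y) (rcons As B) / pmarg p T tau xs As
    = pmarg p T tau.+1 (rcons xs y) (rcons As' B) / pmarg p T tau xs As'.

Definition is_dist (R : realType) (X : finType) (mu : linord X -> R) : Prop :=
  (forall o, 0 <= mu o) /\ \sum_(o : linord X) mu o = 1.

Definition SICDRU (R : realType) (X : finType) (T : nat)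
    (p : seq X -> seq {set X} -> R) : Prop :=
  exists (nu : linord X -> R) (tr : nat -> seq X -> linord X -> R),
    is_dist nu /\
    (forall n : nat, (1 <= n <= T - 1)%N ->
       forall xs : seq X, size xs = n -> is_dist (tr n xs)) /\
    (forall xs As, in_dom T xs As ->
       p xs As =
       \sum_(os : T.-tuple (linord X) |
               all (fun t => inN t.2 t.1.1 t.1.2) (zip (zip xs As) os))
         \prod_(i < T)
            (if (i == 0 :> nat) then nu (tnth os i)
             else tr i (take i xs) (tnth os i))).

(* Necessity.  Under the model, p(x, A) is the product over periods of the
   probability that the preference of the period (drawn from nu, or from the
   transition function given the past consumption) ranks x_i first in A_i.
   Summing out the last periods gives the marginals as truncated products.
   For nonempty B the sets N(y, B), y in B, partition the orders, so summing
   the next marginal over y in B gives the current one (marginality), and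
   p(x^tau y, A^tau B) / p(x^tau, A^tau) is the last factor, which ignores
   A^tau (choice set independence).  The Moebius inverse is the product of the
   per-period probabilities that exactly B_i is ranked weakly below x_i.

   Sufficiency.  By marginality, (y, B) |-> p(x^tau y, A^tau B) / p(x^tau, A^tau)
   is a random choice rule; its Moebius inverse is q summed over the supersets
   of the first tau menus, hence nonnegative, so Falmagne's theorem represents
   it by a distribution over orders, which by choice set independence depends
   on x^tau only.  p is the telescoping product of these conditionals.

   Falmagne's distribution ranks the alternatives by repeatedly picking the
   best remaining one z in C with probability q(z, C) / sum_{x in C} q(x, C).
   The Block-Marschak identities force sum_{x in B} q(x, B) to equal
   sum_{y notin B} q(y, B + y) for nonempty B <> X, so by induction it is the
   probability that exactly B remains at some step, and q(x, B) is the
   probability that x is then picked from B. *)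

From HB Require Import structures.
From mathcomp Require Import all_boot all_order all_algebra.
From mathcomp Require Import reals zify.
Set Implicit Arguments.
Unset Strict Implicit.
Unset Printing Implicit Defensive.
Import Order.TTheory GRing.Theory Num.Theory.
Local Open Scope ring_scope.

Lemma prodr_if0 (R : numDomainType) (I : finType) (c : pred I) (a : I -> R) :
  \prod_i (if c i then a i else 0) = if [forall i, c i] then \prod_i a i else 0.
Proof.
case: ifP => [/forallP c_all | /negbT/forallPn[i /negbTE c_i]].
  by apply: eq_bigr => i _; rewrite c_all.
by rewrite (bigD1 i) //= c_i mul0r.
Qed.

Lemma sum_indicator (R : numDomainType) (I : finType) (P : pred I) (c : I) :
  \sum_(i | P i) ((i == c)%:R : R) = (P c)%:R.
Proof.
case Pc: (P c); last by rewrite big1 // => i; case: eqP => // ->; rewrite Pc.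
by rewrite (bigD1 c) //= eqxx big1 ?addr0 // => i /andP[_ /negbTE ->].
Qed.

Fixpoint sumseq (R : numDomainType) (J : finType) (n : nat) (F : seq J -> R) : R :=
  if n is n'.+1 then \sum_(j : J) sumseq n' (fun s => F (j :: s)) else F [::].

Section SumSeq.
Variables (R : numDomainType) (J : finType).
Implicit Types (n : nat) (F G : seq J -> R).

Lemma sumseqS n F : sumseq n.+1 F = \sum_j sumseq n (fun s => F (j :: s)).
Proof. by []. Qed.

Lemma eq_sumseq n F G :
  (forall s, size s = n -> F s = G s) -> sumseq n F = sumseq n G.
Proof.
elim: n F G => [|n IH] F G eqFG /=; first exact: eqFG.
by apply: eq_bigr => j _; apply: IH => s sz_s; apply: eqFG; rewrite /= sz_s.
Qed.

Lemma sumseq_eq0 n F : (forall s, size s = n -> F s = 0) -> sumseq n F = 0.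
Proof.
elim: n F => [|n IH] F F0 /=; first exact: F0.
by rewrite big1 // => j _; apply: IH => s sz_s; apply: F0; rewrite /= sz_s.
Qed.

Lemma sumseq_ge0 n F : (forall s, size s = n -> 0 <= F s) -> 0 <= sumseq n F.
Proof.
elim: n F => [|n IH] F F_ge0 /=; first exact: F_ge0.
by apply: sumr_ge0 => j _; apply: IH => s sz_s; apply: F_ge0; rewrite /= sz_s.
Qed.

Lemma sumseq_big (I : Type) (r : seq I) (P : pred I) n (F : I -> seq J -> R) :
  sumseq n (fun s => \sum_(i <- r | P i) F i s) = \sum_(i <- r | P i) sumseq n (F i).
Proof.
elim: n F => [|n IH] F //=.
by under eq_bigr do rewrite IH; rewrite exchange_big.
Qed.

Lemma sumseqMl n c F : sumseq n (fun s => c * F s) = c * sumseq n F.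
Proof. by elim: n F => [|n IH] F //=; under eq_bigr do rewrite IH; rewrite mulr_sumr. Qed.

Lemma sumseqMr n c F : sumseq n (fun s => F s * c) = sumseq n F * c.
Proof. by rewrite mulrC -sumseqMl; apply: eq_sumseq => s _; rewrite mulrC. Qed.

Lemma sumseq_cat m n F :
  sumseq (m + n) F = sumseq m (fun s => sumseq n (fun t => F (s ++ t))).
Proof. by elim: m F => [|m IH] F //=; apply: eq_bigr => j _; rewrite IH. Qed.

Lemma sumseq_rcons n F : sumseq n.+1 F = sumseq n (fun s => \sum_j F (rcons s j)).
Proof.
rewrite -addn1 sumseq_cat; apply: eq_sumseq => s _ /=.
by apply: eq_bigr => j _; rewrite cats1.
Qed.

Lemma sum_tuple_sumseq n F : \sum_(t : n.-tuple J) F t = sumseq n F.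
Proof.
elim: n F => [|n IH] F /=.
  by rewrite (big_pred1 [tuple]) // => t; symmetry; apply/eqP; exact: tuple0.
rewrite (reindex (fun jt : J * n.-tuple J => [tuple of jt.1 :: jt.2])) /=.
  rewrite -(pair_bigA _ (fun j (t : n.-tuple J) => F (j :: t))) /=.
  by apply: eq_bigr => j _; rewrite -IH.
exists (fun t : n.+1.-tuple J => (thead t, behead_tuple t)).
  by case=> j t _ /=; congr pair; apply: val_inj.
by move=> [[|j s] //= sz_s] _; apply: val_inj.
Qed.

Lemma sum_tuple_sumseqP n (P : pred (seq J)) F :
  \sum_(t : n.-tuple J | P t) F t = sumseq n (fun s => if P s then F s else 0).
Proof. by rewrite big_mkcond (sum_tuple_sumseq n (fun s => if P s then F s else 0)). Qed.

Lemma sumseq_prod (j0 : J) n (P : nat -> pred J) (F : nat -> J -> R) :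
  sumseq n (fun s => \prod_(i < n) (if P i (nth j0 s i) then F i (nth j0 s i) else 0))
  = \prod_(i < n) \sum_(j | P i j) F i j.
Proof.
elim: n => [|n IH]; first by rewrite /= !big_ord0.
rewrite sumseq_rcons [RHS]big_ord_recr /= -IH -sumseqMr.
apply: eq_sumseq => s sz_s; rewrite mulr_sumr [RHS]big_mkcond; apply: eq_bigr => j _ /=.
rewrite big_ord_recr /= nth_rcons sz_s ltnn eqxx.
case: ifP => _; last by rewrite mulr0.
by congr (_ * _); apply: eq_bigr => i _; rewrite nth_rcons sz_s ltn_ord.
Qed.

End SumSeq.

(** * Falmagne's theorem *)

Section SeqSets.
Variable X : finType.
Implicit Types (s : seq X) (x y z : X) (B C : {set X}).

Lemma mem_full_uniq s y : uniq s -> size s = #|X| -> y \in s.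
Proof.
move=> s_uniq sz_s; have sub_s : {subset s <= enum X} by move=> z; rewrite mem_enum.
have [|_ ->] := uniq_min_size s_uniq sub_s; last by rewrite mem_enum.
by rewrite -cardT sz_s.
Qed.

Lemma set_seq_setC s B :
  uniq s -> all (fun y => y \notin B) s -> size s = #|~: B| -> [set:: s] = ~: B.
Proof.
move=> s_uniq s_out sz_s; apply/eqP; rewrite eqEcard; apply/andP; split.
  by apply/subsetP => y; rewrite !inE => /(allP s_out).
by rewrite -sz_s cardsE (card_uniqP s_uniq).
Qed.

Lemma all_notin_setU1 s z B :
  all (fun y => y \notin z |: B) s = (z \notin s) && all (fun y => y \notin B) s.
Proof.
elim: s => //= a s ->; rewrite in_setU1 in_cons !negb_or eq_sym.
by rewrite !andbA; congr (_ && _); rewrite andbAC.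
Qed.

Lemma all_in_setD1 s z C :
  all (fun y => y \in C :\ z) s = (z \notin s) && all (fun y => y \in C) s.
Proof.
elim: s => //= a s ->; rewrite in_setD1 in_cons negb_or eq_sym.
by rewrite !andbA; congr (_ && _); rewrite andbAC.
Qed.

(* For a ranking s (best first), x is best in A iff A \subset below s x. *)
Definition below s x : {set X} := [set y | (index x s <= index y s)%N].

Lemma below_cat s1 s2 x : x \notin s1 -> below (s1 ++ x :: s2) x = ~: [set:: s1].
Proof.
move=> x_s1; apply/setP => y; rewrite !inE !index_cat (negbTE x_s1) /= eqxx addn0.
by case: ifP => [y_s1 | _]; rewrite ?leq_addr // leqNgt index_mem y_s1.
Qed.

Lemma card_setC_below s x : uniq s -> size s = #|X| -> #|~: below s x| = index x s.
Proof.
move=> s_uniq sz_s.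
have -> : ~: below s x = [set:: take (index x s) s].
  by apply/setP => y; rewrite !inE -ltnNge in_take ?mem_full_uniq.
by rewrite cardsE (card_uniqP (take_uniq _ s_uniq)) size_take index_mem mem_full_uniq.
Qed.

Lemma uniq_below_catE s1 s2 z x B :
  x \in B -> size s1 = #|~: B| -> size s2 = #|B|.-1 ->
  (uniq (s1 ++ z :: s2) && (below (s1 ++ z :: s2) x == B)) =
  [&& z == x, uniq s1 && all (fun y => y \notin B) s1
    & uniq s2 && all (fun y => y \in B :\ x) s2].
Proof.
move=> xB sz1 sz2; have B_gt0 : (0 < #|B|)%N by apply/card_gt0P; exists x.
have sz : size (s1 ++ z :: s2) = #|X|.
  by rewrite size_cat /= sz1 sz2 prednK // addnC cardsC.
apply/andP/and3P => [[s_uniq /eqP below_s] | [/eqP -> /andP[u1 out1] /andP[u2 in2]]].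
  have idx_x : index x (s1 ++ z :: s2) = size s1 by rewrite sz1 -below_s card_setC_below.
  have zx : z = x.
    by have := nth_index x (mem_full_uniq x s_uniq sz); rewrite idx_x nth_cat ltnn subnn.
  subst z; have x_s1 : x \notin s1.
    apply/negP => x_s1; move: idx_x; rewrite index_cat x_s1 => idx.
    by move: (index_mem x s1); rewrite x_s1 idx ltnn.
  move: below_s s_uniq; rewrite below_cat // cat_uniq /= => below_s.
  case/and3P => u1 /norP[_ disj] /andP[x_s2 u2].
  split=> //; apply/andP; split=> //.
    by apply/allP => y y_s1; rewrite -below_s !inE y_s1.
  apply/allP => y y_s2; rewrite in_setD1 -below_s !inE (hasPn disj y y_s2) andbT.
  by apply: contraNneq x_s2 => <-.
have x_s1 : x \notin s1 by apply: contraTN xB => /(allP out1).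
have x_s2 : x \notin s2 by apply: contraT => /negbNE/(allP in2); rewrite !inE eqxx.
split; last by rewrite below_cat // (set_seq_setC u1 out1 sz1) setCK.
rewrite cat_uniq u1 /= x_s2 u2 (negbTE x_s1) !andbT /=.
apply/hasPn => y y_s2; apply: contraTN (allP in2 y y_s2) => /(allP out1).
by rewrite !inE => /negbTE ->; rewrite andbF.
Qed.

End SeqSets.

Definition mass (R : numFieldType) (X : finType) (q : X -> {set X} -> R) (C : {set X}) : R :=
  \sum_(x in C) q x C.

Definition inflow (R : numFieldType) (X : finType) (q : X -> {set X} -> R) (C : {set X}) : R :=
  \sum_(y in ~: C) q y (y |: C).

(* The probability that picking repeatedly z from the remaining set C with
   probability q z C / mass q C first picks the elements of s, in this order. *)
Fixpoint chain (R : numFieldType) (X : finType) (q : X -> {set X} -> R) (C : {set X})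
    (s : seq X) : R :=
  if s is z :: s' then q z C / mass q C * chain q (C :\ z) s' else 1.

Section Falmagne.
Variables (R : numFieldType) (X : finType).
Implicit Types (q : X -> {set X} -> R) (A B C : {set X}) (s : seq X).

Lemma chain_cat q C s1 s2 :
  chain q C (s1 ++ s2) = chain q C s1 * chain q (C :\: [set:: s1]) s2.
Proof.
elim: s1 C => [|z s1 IH] C /=; first by rewrite mul1r set_nil setD0.
by rewrite IH mulrA set_cons setDDl.
Qed.

Lemma sum_upper_inflow q A :
  \sum_(C : {set X} | A \subset C) inflow q C
  = \sum_(C : {set X} | A \subset C) \sum_(x in C | x \notin A) q x C.
Proof.
transitivity (\sum_x \sum_(C : {set X} | A \subset C)
                (if x \notin C then q x (x |: C) else 0)).
  rewrite exchange_big; apply: eq_bigr => C _; rewrite /inflow big_mkcond.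
  by apply: eq_bigr => x _; rewrite inE.
transitivity (\sum_x \sum_(C : {set X} | A \subset C)
                (if (x \in C) && (x \notin A) then q x C else 0)).
  apply: eq_bigr => x _; have [xA | xNA] := boolP (x \in A).
    by rewrite !big1 // => C /subsetP/(_ x xA) ->; rewrite ?andbF.
  rewrite -!big_mkcondr /= [RHS](reindex_onto (fun D => x |: D) (fun C => C :\ x)) /=.
    apply: eq_bigl => D; rewrite setU11 andbT.
    have [xD | xND] := boolP (x \in D).
      rewrite andbF andbT; apply/esym/negbTE/negP => /andP[_ /eqP D_eq].
      by move: xD; rewrite -D_eq setD11.
    by rewrite setU1K // eqxx !andbT -{1}(setU1K xND) subsetD1 xNA andbT.
  by move=> C /and3P[_ xC _]; rewrite setD1K.
by rewrite exchange_big; apply: eq_bigr => C _; rewrite [RHS]big_mkcond.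
Qed.

Lemma upper_sums1_indicator (h : {set X} -> R) :
  (forall A, A != set0 -> \sum_(C : {set X} | A \subset C) h C = 1) ->
  forall A, A != set0 -> h A = (A == setT)%:R.
Proof.
move=> h_upper A; move: {2}#|~: A|.+1 (ltnSn #|~: A|) => k.
elim: k A => [//|k IH] A A_lt A_neq0.
have := h_upper A A_neq0; rewrite (bigD1 A) //=.
rewrite (eq_bigr (fun C => (C == setT)%:R)); last first.
  move=> C /andP[sAC CNA]; apply: IH; last first.
    by apply: contraNneq A_neq0 => C0; rewrite -subset0 -C0.
  have : A \proper C by rewrite properEneq eq_sym CNA.
  by move/proper_card; have := cardsC A; have := cardsC C; lia.
rewrite sum_indicator subsetT eq_sym; case: eqP => _ h_eq; first by rewrite -h_eq addr0.
by apply: (addIr 1); rewrite h_eq add0r.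
Qed.

Section BlockMarschak.
Variables (rho q : X -> {set X} -> R).
Hypothesis rho_sum1 : forall A, A != set0 -> \sum_(x in A) rho x A = 1.
Hypothesis rho_moebius :
  forall x A, x \in A -> rho x A = \sum_(B : {set X} | A \subset B) q x B.

Lemma sum_upper_mass_inflow A :
  A != set0 -> \sum_(C : {set X} | A \subset C) (mass q C - inflow q C) = 1.
Proof.
move=> A_neq0; rewrite -(rho_sum1 A_neq0).
under [RHS]eq_bigr => x xA do rewrite (rho_moebius xA).
rewrite exchange_big /= sumrB sum_upper_inflow -sumrB.
apply: eq_bigr => C sAC; rewrite /mass (bigID (fun x => x \in A)) /= addrK.
by apply: eq_bigl => x; rewrite andb_idl // => /(subsetP sAC).
Qed.

Lemma mass_setT (x0 : X) : mass q setT = 1.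
Proof.
have inflowT : inflow q setT = 0 by rewrite /inflow big1 // => y; rewrite !inE.
have setT_neq0 : [set: X] != set0 by apply/set0Pn; exists x0.
have := upper_sums1_indicator sum_upper_mass_inflow setT_neq0.
by rewrite inflowT subr0 eqxx.
Qed.

Lemma mass_inflow B : B != set0 -> B != setT -> mass q B = inflow q B.
Proof.
move=> B_neq0 /negbTE BNT.
by apply/eqP; rewrite -subr_eq0 (upper_sums1_indicator sum_upper_mass_inflow B_neq0) BNT.
Qed.

End BlockMarschak.

Section Chain.
Variable q : X -> {set X} -> R.
Hypothesis q_ge0 : forall y B, 0 <= q y B.
Hypothesis mass_setT1 : mass q setT = 1.
Hypothesis mass_inflow_q : forall B, B != set0 -> B != setT -> mass q B = inflow q B.

Lemma chain_ge0 C s : 0 <= chain q C s.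
Proof.
elim: s C => [|z s IH] C /=; first exact: ler01.
by rewrite mulr_ge0 ?divr_ge0 ?sumr_ge0.
Qed.

Lemma le_mass x C : x \in C -> q x C <= mass q C.
Proof. by move=> xC; rewrite /mass (bigD1 x) //= lerDl sumr_ge0. Qed.

Lemma mass_mulr_div x C : x \in C -> mass q C * (q x C / mass q C) = q x C.
Proof.
move=> xC; have [m0 | m_neq0] := eqVneq (mass q C) 0; last by rewrite mulrC divfK.
by apply/esym/eqP; rewrite m0 mul0r eq_le q_ge0 -m0 le_mass.
Qed.

Lemma mass_setD1_gt0 z C :
  z \in C -> 0 < q z C -> C :\ z != set0 -> 0 < mass q (C :\ z).
Proof.
move=> zC qz_gt0 Cz_neq0; rewrite mass_inflow_q //; last first.
  by apply: contraTneq (in_setT z) => <-; rewrite setD11.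
apply: (lt_le_trans qz_gt0); rewrite /inflow (bigD1 z) /= ?setD1K ?lerDl ?sumr_ge0 //.
by rewrite !inE eqxx.
Qed.

Lemma sum_chain_prefix k B :
  B != set0 -> #|~: B| = k ->
  sumseq k (fun s => if uniq s && all (fun y => y \notin B) s then chain q setT s else 0)
  = mass q B.
Proof.
elim: k B => [|k IH] B B_neq0 cardBC.
  by rewrite -[B]setCK (cards0_eq cardBC) setC0 /= mass_setT1.
have BNT : B != setT by apply/eqP => BT; move: cardBC; rewrite BT setCT cards0.
rewrite sumseq_rcons sumseq_big mass_inflow_q // /inflow [RHS]big_mkcond.
apply: eq_bigr => z _; rewrite inE.
have [zB | zNB] := boolP (z \in B).
  by rewrite sumseq_eq0 // => s _; rewrite rcons_uniq all_rcons zB andbF.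
have card_zB : #|~: (z |: B)| = k.
  by move: cardBC; rewrite (cardsD1 z) inE zNB setCU setIC -setDE; case.
have zB_neq0 : z |: B != set0 by apply/set0Pn; exists z; rewrite setU11.
rewrite -(mass_mulr_div (setU11 z B)) -{1}(IH (z |: B)) // -sumseqMr.
apply: eq_sumseq => s sz_s; rewrite rcons_uniq all_rcons all_notin_setU1 zNB /=.
case: (boolP (z \in s)) => [|z_s]; first by rewrite andbF mul0r.
case: (boolP (uniq s && _)) => [/andP[s_uniq s_out] | _]; last by rewrite mul0r.
rewrite -cats1 chain_cat /= setTD (@set_seq_setC _ s (z |: B)) ?setCK ?mulr1 //.
  by rewrite all_notin_setU1 z_s.
by rewrite sz_s.
Qed.

Lemma sum_chain_complete k C :
  #|C| = k -> (C != set0 -> 0 < mass q C) ->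
  sumseq k (fun s => if uniq s && all (fun y => y \in C) s then chain q C s else 0) = 1.
Proof.
elim: k C => [|k IH] C cardC mass_gt0 //.
have C_neq0 : C != set0 by apply/set0Pn/card_gt0P; rewrite cardC.
rewrite sumseqS; transitivity (\sum_z (if z \in C then q z C / mass q C else 0)); last first.
  by rewrite -big_mkcond -mulr_suml divff // gt_eqF ?mass_gt0.
apply: eq_bigr => z _.
have [zC | zNC] := boolP (z \in C); last first.
  by rewrite sumseq_eq0 // => s _ /=; rewrite (negbTE zNC) andbF.
have [qz0 | qz_neq0] := eqVneq (q z C) 0.
  by rewrite qz0 mul0r sumseq_eq0 // => s _ /=; rewrite qz0 !mul0r; case: ifP.
rewrite -[RHS]mulr1 -(IH (C :\ z)); first last.
- move=> /mass_setD1_gt0; apply => //.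
  by rewrite lt_def qz_neq0 q_ge0.
- by move: cardC; rewrite (cardsD1 z) zC add1n; case.
rewrite -sumseqMl; apply: eq_sumseq => s _ /=.
rewrite zC all_in_setD1; case: (z \in s); first by rewrite /= andbF mulr0.
by case: ifP; rewrite ?mulr0.
Qed.

Lemma sum_chain_below_eq x B :
  x \in B ->
  sumseq #|X| (fun s => if uniq s && (below s x == B) then chain q setT s else 0) = q x B.
Proof.
move=> xB; have B_gt0 : (0 < #|B|)%N by apply/card_gt0P; exists x.
have B_neq0 : B != set0 by apply/set0Pn; exists x.
have -> : #|X| = (#|~: B| + (#|B|.-1).+1)%N by rewrite prednK // addnC cardsC.
rewrite sumseq_cat.
transitivity (sumseq #|~: B| (fun s1 =>
  (if uniq s1 && all (fun y => y \notin B) s1 then chain q setT s1 else 0) *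
  (q x B / mass q B * sumseq #|B|.-1 (fun s2 =>
     if uniq s2 && all (fun y => y \in B :\ x) s2 then chain q (B :\ x) s2 else 0)))).
  apply: eq_sumseq => s1 sz1; rewrite sumseqS (bigD1 x) //= big1 ?addr0 => [|z zx].
    rewrite -!sumseqMl; apply: eq_sumseq => s2 sz2.
    rewrite uniq_below_catE // eqxx /=.
    case: (boolP (uniq s1 && _)) => [/andP[u1 out1] | _]; last by rewrite mul0r.
    case: (boolP (uniq s2 && _)) => _; last by rewrite !mulr0.
    by rewrite chain_cat /= setTD (set_seq_setC u1 out1 sz1) setCK.
  by rewrite sumseq_eq0 // => s2 sz2; rewrite uniq_below_catE // (negbTE zx).
rewrite sumseqMr sum_chain_prefix //.
have [qx0 | qx_neq0] := eqVneq (q x B) 0; first by rewrite qx0 !mul0r mulr0.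
rewrite sum_chain_complete ?mulr1 ?mass_mulr_div //.
  by move: (cardsD1 x B); rewrite xB add1n => ->.
by apply: mass_setD1_gt0; rewrite // lt_def qx_neq0 q_ge0.
Qed.

Lemma sum_chain_below_sub x A :
  x \in A ->
  sumseq #|X| (fun s => if uniq s && (A \subset below s x) then chain q setT s else 0)
  = \sum_(B : {set X} | A \subset B) q x B.
Proof.
move=> xA; rewrite -(eq_bigr _ (fun B sAB => sum_chain_below_eq (subsetP sAB x xA))).
rewrite -sumseq_big; apply: eq_sumseq => s _.
case: (boolP (uniq s)) => _ /=; last by rewrite big1.
have [sA | nsA] := boolP (A \subset below s x).
  rewrite (bigD1 (below s x)) //= eqxx big1 ?addr0 // => B /andP[_ /negbTE].
  by rewrite eq_sym => ->.
by rewrite big1 // => B sAB; case: eqP => // eB; rewrite eB sAB in nsA.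
Qed.

End Chain.

End Falmagne.

Section LinearOrders.
Variable X : finType.
Implicit Types (o : linord X) (x y : X) (A B : {set X}).

Lemma enum_rank_injb : injectiveb [ffun y : X => enum_rank y].
Proof. by apply/injectiveP => y z; rewrite !ffunE; exact: enum_rank_inj. Qed.

Definition linord0 : linord X :=
  exist (fun f : {ffun X -> _} => injectiveb f) _ enum_rank_injb.

Lemma rank_inj o : injective (val o).
Proof. exact/injectiveP/(valP o). Qed.

Definition ranked o (i : 'I_#|X|) : X := odflt (enum_val i) [pick y | val o y == i].

(* The alternatives of X listed from the most to the least preferred. *)
Definition ranking o : #|X|.-tuple X := map_tuple (ranked o) (ord_tuple #|X|).

Lemma rank_ranked o i : val o (ranked o i) = i.
Proof.
rewrite /ranked; case: pickP => [y /eqP // | no_y] /=.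
have onto := @inj_card_onto _ _ _ (@rank_inj o); rewrite card_ord in onto.
by case/codomP: (onto (leqnn _) i) => y i_eq; move: (no_y y); rewrite -i_eq eqxx.
Qed.

Lemma ranked_rank o y : ranked o (val o y) = y.
Proof. by apply: (@rank_inj o); rewrite rank_ranked. Qed.

Lemma ranked_inj o : injective (ranked o).
Proof. by move=> i j eq_ij; rewrite -(rank_ranked o i) -(rank_ranked o j) eq_ij. Qed.

Lemma index_ranking o y : index y (ranking o) = val o y.
Proof.
by rewrite /= -{1}(ranked_rank o y) index_map ?index_enum_ord //; exact: ranked_inj.
Qed.

Lemma ranking_uniq o : uniq (ranking o).
Proof. by rewrite /= map_inj_uniq ?val_ord_tuple ?enum_uniq //; exact: ranked_inj. Qed.

Lemma inN_below o x A : inN o x A = (A \subset below (ranking o) x).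
Proof.
apply/forallP/subsetP => [xN y yA | sA y].
  move: (xN y); rewrite yA inE !index_ranking /prefers /=.
  by case: eqVneq => [-> _ | _ /ltnW].
apply/implyP => yA; apply/implyP => yx.
move: (sA y yA); rewrite inE !index_ranking /prefers leq_eqVlt => /orP[/eqP eq_xy | //].
by move: yx; rewrite (rank_inj (val_inj eq_xy)) eqxx.
Qed.

Definition linord_of_seq (s : seq X) : linord X :=
  odflt linord0 (insub [ffun y => insubd (enum_rank y) (index y s)]).

Lemma rankingK : cancel ranking linord_of_seq.
Proof.
move=> o; rewrite /linord_of_seq.
have -> : [ffun y => insubd (enum_rank y) (index y (ranking o))] = val o.
  apply/ffunP => y; rewrite ffunE index_ranking; apply: val_inj.
  by rewrite insubdK //; exact: ltn_ord.
by case: insubP => [o' _ val_o' | /negP[]]; [apply: val_inj | exact: (valP o)].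
Qed.

Lemma linord_of_seqK (t : #|X|.-tuple X) : uniq t -> ranking (linord_of_seq t) = t.
Proof.
move=> t_uniq; have sz_t : size t = #|X| by rewrite size_tuple.
set f := [ffun y => insubd (enum_rank y) (index y t)].
have val_f y : val (f y) = index y t.
  rewrite ffunE insubdK //; move: (mem_full_uniq y t_uniq sz_t).
  by rewrite -index_mem sz_t.
have f_inj : injectiveb f.
  apply/injectiveP => y z /(congr1 val); rewrite !val_f => idx_eq.
  by rewrite -(nth_index y (mem_full_uniq y t_uniq sz_t)) idx_eq nth_index ?mem_full_uniq.
rewrite /linord_of_seq -/f insubT /=.
apply: eq_from_tnth => i; rewrite tnth_map tnth_ord_tuple.
apply: (@rank_inj (exist _ f f_inj)); rewrite rank_ranked; apply: val_inj => /=.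
by rewrite val_f (tnth_nth (tnth t i)) index_uniq ?sz_t.
Qed.

Lemma sum_linord (R : numDomainType) (G : seq X -> R) :
  \sum_(o : linord X) G (ranking o) = sumseq #|X| (fun s => if uniq s then G s else 0).
Proof.
rewrite -(sum_tuple_sumseqP #|X| (fun s : seq X => uniq s) G).
rewrite [RHS](reindex ranking) /=; first by apply: eq_bigl => o; rewrite ranking_uniq.
by exists linord_of_seq => [o _ | t]; [exact: rankingK | rewrite inE; exact: linord_of_seqK].
Qed.

Lemma sum_inN_partition (R : numDomainType) B (g : linord X -> R) :
  B != set0 -> \sum_(y in B) \sum_(o | inN o y B) g o = \sum_o g o.
Proof.
case/set0Pn => y0 y0B; under eq_bigr do rewrite big_mkcond.
rewrite exchange_big; apply: eq_bigr => o _ /=.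
have [best bestB best_min] := arg_minnP (fun y => nat_of_ord (val o y)) y0B.
have best_N : inN o best B.
  apply/forallP => z; apply/implyP => zB; apply/implyP => z_best.
  rewrite /prefers ltn_neqAle best_min // andbT.
  by apply: contra z_best => /eqP/val_inj/rank_inj ->.
rewrite (bigD1 best) //= best_N big1 ?addr0 // => z /andP[zB z_best].
have := forallP best_N z; rewrite zB z_best /= /prefers => best_z.
case: ifP => // /forallP/(_ best)/implyP/(_ bestB); rewrite eq_sym z_best /= /prefers.
by rewrite ltnNge (ltnW best_z).
Qed.

Lemma sum_upper_below_eq (R : numDomainType) (g : linord X -> R) x (A : {set X}) :
  \sum_(B : {set X} | A \subset B) \sum_(o | below (ranking o) x == B) g o
  = \sum_(o | inN o x A) g o.
Proof.
rewrite (partition_big (fun o => below (ranking o) x) (fun B => A \subset B)) => [|o].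
  apply: eq_bigr => B sAB; apply: eq_bigl => o.
  by rewrite inN_below; case: eqP => [->|]; rewrite ?sAB ?andbF.
by rewrite inN_below.
Qed.

End LinearOrders.

Definition falmagne_dist (R : numFieldType) (X : finType) (q : X -> {set X} -> R)
    (o : linord X) : R :=
  chain q setT (ranking o).

Theorem falmagne (R : realType) (X : finType) (rho q : X -> {set X} -> R) (x0 : X) :
  (forall A : {set X}, A != set0 -> \sum_(x in A) rho x A = 1) ->
  (forall x (A : {set X}), x \in A -> rho x A = \sum_(B : {set X} | A \subset B) q x B) ->
  (forall y B, 0 <= q y B) ->
  is_dist (falmagne_dist q) /\
  (forall x (A : {set X}), x \in A -> \sum_(o | inN o x A) falmagne_dist q o = rho x A).
Proof.
move=> rho_sum1 rho_moebius q_ge0.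
have massT := mass_setT rho_sum1 rho_moebius x0.
have mass_inflow_q := mass_inflow rho_sum1 rho_moebius.
have represents x (A : {set X}) : x \in A -> \sum_(o | inN o x A) falmagne_dist q o = rho x A.
  move=> xA; rewrite rho_moebius // -(sum_chain_below_sub q_ge0 massT mass_inflow_q xA).
  rewrite big_mkcond /=; under eq_bigr do rewrite inN_below.
  rewrite (sum_linord (fun s => if A \subset below s x then chain q setT s else 0)).
  by apply: eq_sumseq => s _; case: (uniq s).
split=> //; split=> [o | ]; first exact: chain_ge0.
have x0_single : [set x0] != set0 by apply/set0Pn; exists x0; rewrite set11.
rewrite -(@rho_sum1 _ x0_single) big_set1 -represents ?set11 //.
apply: eq_bigl => o; apply/esym/forallP => y.
by apply/implyP; rewrite inE => /eqP ->; rewrite eqxx.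
Qed.

(** * Product form of the model *)

Lemma all2_rcons (S T : Type) (r : S -> T -> bool) s t x y :
  all2 r (rcons s x) (rcons t y) = all2 r s t && r x y.
Proof.
elim: s t => [|a s IH] [|b t] /=; first by rewrite andbT.
- by case: t => [|c t] /=; rewrite andbF.
- by case: s {IH} => [|c s] /=; rewrite andbF.
- by rewrite IH andbA.
Qed.

Lemma all2_forall_nth (S T : Type) (r : S -> T -> bool) (a : S) (b : T) n s t :
  size s = n -> size t = n -> all2 r s t = [forall i : 'I_n, r (nth a s i) (nth b t i)].
Proof.
move=> sz_s sz_t; rewrite all2E sz_s sz_t eqxx /=.
have sz_st : size (zip s t) = n by rewrite size_zip sz_s sz_t minnn.
apply/(all_nthP (a, b))/forallP => [r_st i | r_st i lt_i].
  by have := r_st i; rewrite sz_st nth_zip ?sz_s ?sz_t //; apply.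
by rewrite sz_st in lt_i; have := r_st (Ordinal lt_i); rewrite nth_zip ?sz_s ?sz_t.
Qed.

Section InDom.
Variable X : finType.
Implicit Types (xs : seq X) (As Cs : seq {set X}).

Lemma in_dom_size n xs As : in_dom n xs As -> size xs = n /\ size As = n.
Proof. by case/and4P => /eqP -> /eqP ->. Qed.

Lemma in_dom0 xs As : in_dom 0 xs As -> xs = [::] /\ As = [::].
Proof. by case/in_dom_size; case: xs => //; case: As. Qed.

Lemma in_dom_rcons n xs As x A :
  in_dom n.+1 (rcons xs x) (rcons As A) = in_dom n xs As && (x \in A).
Proof.
rewrite /in_dom !size_rcons !eqSS all_rcons all2_rcons.
have [xA | _] := boolP (x \in A); last by rewrite !andbF.
by rewrite !andbT; have -> : A != set0 by apply/set0Pn; exists x.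
Qed.

Lemma in_dom_cons n xs As x A :
  in_dom n.+1 (x :: xs) (A :: As) = in_dom n xs As && (x \in A).
Proof.
rewrite /in_dom /= !eqSS.
have [xA | _] := boolP (x \in A); last by rewrite !andbF.
by rewrite !andbT; have -> : A != set0 by apply/set0Pn; exists x.
Qed.

Lemma in_dom_superset n xs As Cs :
  in_dom n xs As -> all2 (fun A C : {set X} => A \subset C) As Cs -> in_dom n xs Cs.
Proof.
elim: xs As Cs n => [|x xs IH] [|A As] [|C Cs] [|n] D //=; try by case: (in_dom_size D).
move: D; rewrite !in_dom_cons => /andP[D xA] /andP[sAC sAsCs].
by rewrite (IH _ _ _ D sAsCs) (subsetP sAC x xA).
Qed.

Lemma in_dom_void n xs As : [set: X] = set0 -> (0 < n)%N -> ~~ in_dom n xs As.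
Proof.
move=> X_empty n_gt0; apply/negP => /in_dom_size[sz_xs _].
case: xs sz_xs => [sz0 | x _ _]; first by rewrite -sz0 in n_gt0.
by have := in_setT x; rewrite X_empty inE.
Qed.

End InDom.

Section ProductForm.
Variables (R : realType) (X : finType) (x0 : X).
Implicit Types (f : nat -> seq X -> linord X -> R) (xs : seq X) (As : seq {set X}).

Lemma sum_inN_tuple_prod n (g : nat -> linord X -> R) xs As :
  size xs = n -> size As = n ->
  \sum_(os : n.-tuple (linord X) |
          all (fun t => inN t.2 t.1.1 t.1.2) (zip (zip xs As) os))
     \prod_(i < n) g i (tnth os i)
  = \prod_(i < n) \sum_(o | inN o (nth x0 xs i) (nth set0 As i)) g i o.
Proof.
move=> sz_xs sz_As.
rewrite -(sumseq_prod (linord0 X) n (fun i o => inN o (nth x0 xs i) (nth set0 As i)) g).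
under eq_bigr do under eq_bigr do rewrite (tnth_nth (linord0 X)).
rewrite (sum_tuple_sumseqP n
  (fun os => all (fun t => inN t.2 t.1.1 t.1.2) (zip (zip xs As) os))
  (fun os => \prod_(i < n) g i (nth (linord0 X) os i))).
apply: eq_sumseq => os sz_os; rewrite prodr_if0.
have -> : all (fun t => inN t.2 t.1.1 t.1.2) (zip (zip xs As) os)
          = all2 (fun xA o => inN o xA.1 xA.2) (zip xs As) os.
  by rewrite all2E size_zip sz_xs sz_As sz_os minnn eqxx.
rewrite (all2_forall_nth _ (x0, set0) (linord0 X) (n := n)) ?size_zip ?sz_xs ?sz_As ?minnn //.
by congr (if _ then _ else _); apply: eq_forallb => i; rewrite nth_zip ?sz_xs ?sz_As.
Qed.

(* Periods are numbered from 0: this is the factor of period i.+1. *)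
Definition period_prob f xs As i : R :=
  \sum_(o | inN o (nth x0 xs i) (nth set0 As i)) f i (take i xs) o.

Lemma prod_period_prob_rcons f xs As y B :
  size xs = size As ->
  \prod_(i < (size xs).+1) period_prob f (rcons xs y) (rcons As B) i
  = (\prod_(i < size xs) period_prob f xs As i) * \sum_(o | inN o y B) f (size xs) xs o.
Proof.
move=> sz_eq; rewrite big_ord_recr /= /period_prob !nth_rcons -sz_eq ltnn eqxx.
rewrite -cats1 take_size_cat //; congr (_ * _); apply: eq_bigr => i _.
by rewrite nth_cat nth_rcons -sz_eq ltn_ord takel_cat // ltnW.
Qed.

(* The Moebius inverse of a product form is the product of the per-period
   Moebius inverses. *)
Definition moebius_product (T : nat) f xs (Bs : seq {set X}) : R :=
  \prod_(i < T) \sum_(o | below (ranking o) (nth x0 xs i) == nth set0 Bs i) f i (take i xs) o.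

Section Representation.
Variables (T : nat) (p : seq X -> seq {set X} -> R).

Definition stochastic f :=
  forall n zs, (n < T)%N -> size zs = n -> is_dist (f n zs).

Definition product_form f :=
  forall xs As, in_dom T xs As -> p xs As = \prod_(i < T) period_prob f xs As i.

Lemma SICDRUP : (0 < T)%N -> SICDRU T p <-> exists f, stochastic f /\ product_form f.
Proof.
move=> T_gt0; split=> [[nu [tr [nu_dist [tr_dist p_eq]]]] | [f [f_dist p_eq]]].
  exists (fun i zs => if i == 0%N then nu else tr i zs); split.
    move=> n zs lt_nT sz_zs; case: eqP => // /eqP n_neq0.
    by apply: tr_dist => //; lia.
  move=> xs As D; have [sz_xs sz_As] := in_dom_size D.
  rewrite p_eq //.
  rewrite (sum_inN_tuple_prod (fun i o => if i == 0%N then nu o else tr i (take i xs) o)) //.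
  by apply: eq_bigr => i _; apply: eq_bigr => o _; case: eqP.
exists (f 0%N [::]), f; split; first exact: f_dist.
split=> [n /andP[n_gt0 n_lt] zs sz_zs | xs As D]; first by apply: f_dist => //; lia.
have [sz_xs sz_As] := in_dom_size D.
rewrite p_eq // -(sum_inN_tuple_prod (fun i o => f i (take i xs) o)) //.
by apply: eq_bigr => os _; apply: eq_bigr => i _; case: eqP => // ->; rewrite take0.
Qed.

Section Necessity.
Variable f : nat -> seq X -> linord X -> R.
Hypothesis f_dist : stochastic f.
Hypothesis p_eq : product_form f.

Lemma sum_inN_last tau xs B :
  (tau < T)%N -> size xs = tau -> B != set0 ->
  \sum_(y in B) \sum_(o | inN o y B) f tau xs o = 1.
Proof.
by move=> lt_tau sz_xs B_neq0; rewrite sum_inN_partition //; case: (f_dist lt_tau sz_xs).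
Qed.

Lemma pext_product_form k xs As :
  (k <= T)%N -> in_dom (T - k) xs As ->
  pext p k xs As = \prod_(i < T - k) period_prob f xs As i.
Proof.
elim: k xs As => [|k IH] xs As le_kT D /=; first by rewrite subn0 in D *; exact: p_eq.
have [sz_xs sz_As] := in_dom_size D.
have T_k : (T - k = (T - k.+1).+1)%N by lia.
transitivity (\sum_y \prod_(i < (size xs).+1) period_prob f (rcons xs y) (rcons As setT) i).
  apply: eq_bigr => y _; rewrite IH ?sz_xs -?T_k 1?ltnW //.
  by rewrite T_k in_dom_rcons D in_setT.
rewrite (eq_bigr (fun y => (\prod_(i < size xs) period_prob f xs As i) *
   \sum_(o | inN o y setT) f (size xs) xs o)); last first.
  by move=> y _; rewrite prod_period_prob_rcons // sz_xs sz_As.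
rewrite -mulr_sumr -[RHS]mulr1 sz_xs; congr (_ * _).
have lt_kT : (T - k.+1 < T)%N by lia.
have setT_neq0 : [set: X] != set0 by apply/set0Pn; exists x0.
rewrite -(sum_inN_last lt_kT sz_xs setT_neq0).
by apply: eq_bigl => y; rewrite in_setT.
Qed.

Lemma pmarg_product_form tau xs As :
  (tau <= T)%N -> in_dom tau xs As ->
  pmarg p T tau xs As = \prod_(i < tau) period_prob f xs As i.
Proof. by move=> le_tau D; rewrite /pmarg pext_product_form ?leq_subr ?subKn. Qed.

Lemma pmarg_rcons_product_form tau xs As y (B : {set X}) :
  (tau < T)%N -> in_dom tau xs As -> y \in B ->
  pmarg p T tau.+1 (rcons xs y) (rcons As B)
  = pmarg p T tau xs As * \sum_(o | inN o y B) f tau xs o.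
Proof.
move=> lt_tau D yB; have [sz_xs sz_As] := in_dom_size D.
have D_rcons : in_dom tau.+1 (rcons xs y) (rcons As B) by rewrite in_dom_rcons D yB.
rewrite !pmarg_product_form // 1?ltnW // -[in LHS]sz_xs.
by rewrite prod_period_prob_rcons ?sz_xs ?sz_As.
Qed.

Lemma product_form_marginality : marginality T p.
Proof.
move=> tau /andP[tau_gt0 le_tau] xs As D.
have lt_tau : (tau < T)%N by lia.
have [sz_xs _] := in_dom_size D.
suff sum_eq (E : {set X}) : E != set0 ->
    \sum_(y in E) pmarg p T tau.+1 (rcons xs y) (rcons As E) = pmarg p T tau xs As.
  by move=> B C /sum_eq -> /sum_eq ->.
move=> E_neq0; rewrite (eq_bigr _ (fun y yE => pmarg_rcons_product_form lt_tau D yE)).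
by rewrite -mulr_sumr sum_inN_last ?mulr1.
Qed.

Lemma product_form_choice_set_independence : choice_set_independence T p.
Proof.
move=> tau /andP[tau_gt0 le_tau] B y yB xs As As' D D'.
have lt_tau : (tau < T)%N by lia.
suff ratio As0 : in_dom tau xs As0 -> 0 < pmarg p T tau xs As0 ->
    pmarg p T tau.+1 (rcons xs y) (rcons As0 B) / pmarg p T tau xs As0
    = \sum_(o | inN o y B) f tau xs o.
  by move=> /(ratio _ D) -> /(ratio _ D') ->.
by move=> D0 pos0; rewrite pmarg_rcons_product_form // mulrC mulKf ?gt_eqF.
Qed.

Lemma product_form_complete_monotonicity : complete_monotonicity T p.
Proof.
exists (moebius_product T f); split=> [xs As D | xs Bs D]; last first.
  have [sz_xs _] := in_dom_size D.
  apply: prodr_ge0 => i _; apply: sumr_ge0 => o _.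
  have sz_take : size (take i xs) = i by rewrite size_takel // sz_xs ltnW.
  by case: (f_dist (ltn_ord i) sz_take) => f_ge0 _; exact: f_ge0.
have [sz_xs sz_As] := in_dom_size D.
rewrite p_eq // (sum_tuple_sumseqP T _ (moebius_product T f xs)).
under eq_bigr do rewrite /period_prob -sum_upper_below_eq.
rewrite -(sumseq_prod set0 T (fun i B => nth set0 As i \subset B)
  (fun i B => \sum_(o | below (ranking o) (nth x0 xs i) == B) f i (take i xs) o)).
by apply: eq_sumseq => Bs sz_Bs; rewrite prodr_if0 (all2_forall_nth _ set0 set0 sz_As sz_Bs).
Qed.

Lemma necessity :
  [/\ marginality T p, complete_monotonicity T p & choice_set_independence T p].
Proof.
split; [exact: product_form_marginality | exact: product_form_complete_monotonicity
       | exact: product_form_choice_set_independence].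
Qed.

End Necessity.
End Representation.
End ProductForm.

(** * Sufficiency *)

Definition dirac (R : realType) (X : finType) (o0 : linord X) (o : linord X) : R :=
  (o == o0)%:R.

Lemma dirac_dist (R : realType) (X : finType) (o0 : linord X) : is_dist (@dirac R X o0).
Proof. by split=> [o | ]; rewrite /dirac ?ler0n // sum_indicator. Qed.

Section Sufficiency.
Variables (R : realType) (X : finType) (x0 : X) (T : nat) (p : seq X -> seq {set X} -> R).
Implicit Types (xs : seq X) (As : seq {set X}).

Lemma pext_sumseq (g : seq X -> seq {set X} -> R) k xs As :
  pext g k xs As = sumseq k (fun ys => g (xs ++ ys) (As ++ nseq k setT)).
Proof.
elim: k xs As => [|k IH] xs As /=; first by rewrite !cats0.
by apply: eq_bigr => y _; rewrite IH; apply: eq_sumseq => ys _; rewrite -!cats1 -!catA.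
Qed.

Lemma pext_ge0 (g : seq X -> seq {set X} -> R) :
  (forall xs As, in_dom T xs As -> 0 <= g xs As) ->
  forall k xs As, (k <= T)%N -> in_dom (T - k) xs As -> 0 <= pext g k xs As.
Proof.
move=> g_ge0; elim=> [|k IH] xs As le_kT D /=; first by apply: g_ge0; rewrite subn0 in D.
apply: sumr_ge0 => y _; apply: IH; first exact: ltnW.
have -> : (T - k = (T - k.+1).+1)%N by lia.
by rewrite in_dom_rcons D in_setT.
Qed.

Lemma sum_pmarg_setT tau xs As :
  (tau < T)%N -> \sum_y pmarg p T tau.+1 (rcons xs y) (rcons As setT) = pmarg p T tau xs As.
Proof. by move=> lt_tau; rewrite /pmarg [in RHS](_ : T - tau = (T - tau.+1).+1)%N //; lia. Qed.

Hypothesis T_gt0 : (0 < T)%N.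
Hypothesis p_rjcr : is_rjcr T p.

Lemma pmarg_ge0 tau xs As : (tau <= T)%N -> in_dom tau xs As -> 0 <= pmarg p T tau xs As.
Proof.
move=> le_tau D; apply: pext_ge0 (proj1 p_rjcr) _ _ _ (leq_subr _ _) _.
by rewrite subKn.
Qed.

Lemma sum_pmarg1 B : B != set0 -> \sum_(y in B) pmarg p T 1 [:: y] [:: B] = 1.
Proof.
move=> B_neq0; set n := (T - 1)%N; have T_eq : T = n.+1 by rewrite /n; lia.
have setT_ok : all (fun A : {set X} => A != set0) (nseq n setT).
  by rewrite all_nseq; apply/orP; right; apply/set0Pn; exists x0.
have := proj2 p_rjcr (B :: nseq n setT); rewrite /= size_nseq -T_eq B_neq0 setT_ok.
move=> /(_ erefl isT) <-; set As := B :: nseq n setT.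
rewrite (sum_tuple_sumseqP T (fun s => all2 (fun (x : X) (A : {set X}) => x \in A) s As)
  (fun s => p s As)) [in RHS]T_eq sumseqS big_mkcond.
apply: eq_bigr => y _; rewrite /pmarg -/n pext_sumseq /=.
have [yB | _] := boolP (y \in B); last by rewrite sumseq_eq0.
have all2_setT s : all2 (fun (x : X) (A : {set X}) => x \in A) s (nseq (size s) setT).
  by elim: s => //= a s ->; rewrite in_setT.
by apply: eq_sumseq => s sz_s; rewrite -[in RHS]sz_s all2_setT.
Qed.

Lemma pmarg0 : pmarg p T 0 [::] [::] = 1.
Proof.
have setT_neq0 : [set: X] != set0 by apply/set0Pn; exists x0.
rewrite -(sum_pmarg_setT [::] [::] T_gt0) -(sum_pmarg1 setT_neq0).
by apply: eq_bigl => y; rewrite in_setT.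
Qed.

Hypothesis p_marg : marginality T p.

Lemma marginality_sum tau xs As B :
  (tau < T)%N -> in_dom tau xs As -> B != set0 ->
  \sum_(y in B) pmarg p T tau.+1 (rcons xs y) (rcons As B) = pmarg p T tau xs As.
Proof.
case: tau => [|tau] lt_tau D B_neq0.
  by have [-> ->] := in_dom0 D; rewrite pmarg0 sum_pmarg1.
have setT_neq0 : [set: X] != set0 by apply/set0Pn; exists x0.
have tau_range : (1 <= tau.+1 <= T - 1)%N by apply/andP; split=> //; lia.
rewrite (p_marg tau_range D B_neq0 setT_neq0).
by rewrite -sum_pmarg_setT //; apply: eq_bigl => y; rewrite in_setT.
Qed.

Section Moebius.
Variable q : seq X -> seq {set X} -> R.
Hypothesis p_moebius : forall xs As, in_dom T xs As ->
  p xs As = \sum_(Bs : T.-tuple {set X} | all2 (fun A B : {set X} => A \subset B) As Bs)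
              q xs Bs.
Hypothesis q_ge0 : forall xs As, in_dom T xs As -> 0 <= q xs As.

Lemma pext_moebius k xs As :
  (k <= T)%N -> in_dom (T - k) xs As ->
  pext p k xs As = sumseq (T - k) (fun Cs =>
    if all2 (fun A B : {set X} => A \subset B) As Cs then pext q k xs Cs else 0).
Proof.
elim: k xs As => [|k IH] xs As le_kT D.
  by rewrite subn0 in D *; rewrite /= p_moebius // sum_tuple_sumseqP.
have [sz_xs sz_As] := in_dom_size D.
have T_k : (T - k = (T - k.+1).+1)%N by lia.
transitivity (\sum_y sumseq (T - k.+1).+1 (fun Cs =>
    if all2 (fun A B : {set X} => A \subset B) (rcons As setT) Cs
    then pext q k (rcons xs y) Cs else 0)).
  apply: eq_bigr => y _; rewrite -T_k -IH ?T_k ?in_dom_rcons ?D ?in_setT //.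
  exact: ltnW.
under eq_bigr do rewrite sumseq_rcons.
rewrite -sumseq_big; apply: eq_sumseq => Cs _.
case: (boolP (all2 _ As Cs)) => [sAsCs | nsAsCs]; last first.
  by rewrite big1 // => y _; rewrite big1 // => C _; rewrite all2_rcons (negbTE nsAsCs).
rewrite /=; apply: eq_bigr => y _.
rewrite (bigD1 setT) //= all2_rcons sAsCs subxx big1 ?addr0 // => C CNT.
by rewrite all2_rcons sAsCs subTset (negbTE CNT).
Qed.

Definition moebius_marg tau xs As y (C : {set X}) : R :=
  sumseq tau (fun Cs => if all2 (fun A B : {set X} => A \subset B) As Cs
                        then pext q (T - tau.+1) (rcons xs y) (rcons Cs C) else 0).

Lemma pmarg_rcons_moebius tau xs As y (B : {set X}) :
  (tau < T)%N -> in_dom tau xs As -> y \in B ->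
  pmarg p T tau.+1 (rcons xs y) (rcons As B)
  = \sum_(C : {set X} | B \subset C) moebius_marg tau xs As y C.
Proof.
move=> lt_tau D yB; rewrite /pmarg pext_moebius ?leq_subr ?subKn ?in_dom_rcons ?D //.
rewrite sumseq_rcons -sumseq_big; apply: eq_sumseq => Cs _.
rewrite [RHS]big_mkcond; apply: eq_bigr => C _; rewrite all2_rcons.
by case: (B \subset C); case: (all2 _ As Cs).
Qed.

Lemma moebius_marg_ge0 tau xs As y (C : {set X}) :
  (tau < T)%N -> in_dom tau xs As -> y \in C -> 0 <= moebius_marg tau xs As y C.
Proof.
move=> lt_tau D yC; apply: sumseq_ge0 => Cs _; case: ifP => // sAsCs.
apply: (pext_ge0 q_ge0); first exact: leq_subr.
by rewrite subKn // in_dom_rcons (in_dom_superset D sAsCs) yC.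
Qed.

(* The Moebius inverse of the conditional rule (y, C) |-> p(xs y, As C) / p(xs, As).
   q is constrained only on in_dom T, hence the guard y \in C. *)
Definition cond_moebius tau xs As y (C : {set X}) : R :=
  if y \in C then moebius_marg tau xs As y C / pmarg p T tau xs As else 0.

Lemma cond_falmagne tau xs As :
  (tau < T)%N -> in_dom tau xs As -> 0 < pmarg p T tau xs As ->
  is_dist (falmagne_dist (cond_moebius tau xs As)) /\
  (forall y (B : {set X}), y \in B ->
     \sum_(o | inN o y B) falmagne_dist (cond_moebius tau xs As) o
     = pmarg p T tau.+1 (rcons xs y) (rcons As B) / pmarg p T tau xs As).
Proof.
move=> lt_tau D pmarg_gt0; apply: falmagne x0 _ _ _.
- by move=> B B_neq0; rewrite -mulr_suml marginality_sum // divff // gt_eqF.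
- move=> y B yB; rewrite pmarg_rcons_moebius // mulr_suml.
  by apply: eq_bigr => C sBC; rewrite /cond_moebius (subsetP sBC y yB).
- move=> y C; rewrite /cond_moebius; case: ifP => // yC.
  by rewrite divr_ge0 ?moebius_marg_ge0 ?pmarg_ge0 // ltnW.
Qed.

Definition cond_dist tau xs : linord X -> R :=
  if [pick As : tau.-tuple {set X} | in_dom tau xs As && (0 < pmarg p T tau xs As)]
    is Some As then falmagne_dist (cond_moebius tau xs As)
  else dirac R (linord0 X).

Lemma cond_dist_stochastic : stochastic T cond_dist.
Proof.
move=> tau xs lt_tau _; rewrite /cond_dist; case: pickP => [As /andP[D pos] | _].
  exact: (cond_falmagne lt_tau D pos).1.
exact: dirac_dist.
Qed.

Hypothesis p_csi : choice_set_independence T p.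

Lemma pmarg_rcons_cond tau xs As y (B : {set X}) :
  (tau < T)%N -> in_dom tau xs As -> y \in B ->
  pmarg p T tau.+1 (rcons xs y) (rcons As B)
  = pmarg p T tau xs As * \sum_(o | inN o y B) cond_dist tau xs o.
Proof.
move=> lt_tau D yB; have [sz_xs sz_As] := in_dom_size D.
have [pmarg0 | pmarg_neq0] := eqVneq (pmarg p T tau xs As) 0.
  rewrite pmarg0 mul0r; have B_neq0 : B != set0 by apply/set0Pn; exists y.
  move: (marginality_sum lt_tau D B_neq0); rewrite pmarg0.
  move/psumr_eq0P; apply=> // z zB; apply: pmarg_ge0 => //.
  by rewrite in_dom_rcons D zB.
have pos : 0 < pmarg p T tau xs As by rewrite lt_def pmarg_neq0 pmarg_ge0 // ltnW.
rewrite /cond_dist; case: pickP => [As' /andP[D' pos'] | no_As]; last first.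
  by have := no_As (Tuple (introT eqP sz_As)); rewrite /= D pos.
rewrite (cond_falmagne lt_tau D' pos').2 //.
have [tau0 | tau_gt0] := posnP tau.
  have As_nil : As = [::] by apply: size0nil; rewrite sz_As.
  have As'_nil : As' = [::] :> seq _ by apply: size0nil; rewrite size_tuple.
  by rewrite As'_nil -As_nil mulrC divfK.
have tau_range : (1 <= tau <= T - 1)%N by apply/andP; split=> //; lia.
by rewrite -(p_csi tau_range yB D D' pos pos') mulrC divfK.
Qed.

Lemma pmarg_cond_product tau xs As :
  (tau <= T)%N -> in_dom tau xs As ->
  pmarg p T tau xs As = \prod_(i < tau) period_prob x0 cond_dist xs As i.
Proof.
elim: tau xs As => [|tau IH] xs As le_tau D.
  by have [-> ->] := in_dom0 D; rewrite pmarg0 big_ord0.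
have [sz_xs sz_As] := in_dom_size D.
case/lastP: xs sz_xs D => [// | xs y] sz_xs; case/lastP: As sz_As => [// | As B] sz_As.
rewrite in_dom_rcons => /andP[D yB]; have [sz_xs' sz_As'] := in_dom_size D.
rewrite pmarg_rcons_cond // IH 1?ltnW // -[in RHS]sz_xs'.
by rewrite prod_period_prob_rcons ?sz_xs' ?sz_As'.
Qed.

Lemma cond_dist_product_form : product_form x0 T p cond_dist.
Proof.
move=> xs As D; rewrite -pmarg_cond_product //.
by rewrite /pmarg subnn.
Qed.

Lemma sufficiency : exists f, stochastic T f /\ product_form x0 T p f.
Proof.
by exists cond_dist; split; [exact: cond_dist_stochastic | exact: cond_dist_product_form].
Qed.

End Moebius.

End Sufficiency.

Section EmptyAlternatives.
Variables (R : realType) (X : finType) (T : nat) (p : seq X -> seq {set X} -> R).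
Hypothesis X_empty : [set: X] = set0.
Hypothesis T_gt0 : (0 < T)%N.

Lemma no_dom n (xs : seq X) (As : seq {set X}) : (0 < n)%N -> in_dom n xs As -> False.
Proof. by move=> n_gt0; apply/negP; exact: in_dom_void X_empty n_gt0. Qed.

Lemma void_axioms :
  [/\ marginality T p, complete_monotonicity T p & choice_set_independence T p].
Proof.
split=> [tau /andP[tau_gt0 _] xs As /(no_dom tau_gt0) //|
         | tau /andP[tau_gt0 _] B y _ xs As _ /(no_dom tau_gt0) //].
by exists (fun _ _ => 0); split=> xs As /(no_dom T_gt0).
Qed.

Lemma void_SICDRU : SICDRU T p.
Proof.
exists (dirac R (linord0 X)), (fun _ _ => dirac R (linord0 X)).
split; first exact: dirac_dist.
by split=> [n _ zs _ | xs As /(no_dom T_gt0)]; first exact: dirac_dist.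
Qed.

End EmptyAlternatives.

Unset Implicit Arguments.

Theorem theorem13 (R : realType) (X : finType) (T : nat)
    (p : seq X -> seq {set X} -> R) :
  (1 <= T)%N -> is_rjcr T p ->
  (SICDRU T p <->
   [/\ marginality T p, complete_monotonicity T p & choice_set_independence T p]).
Proof.
move=> T_gt0 p_rjcr; have [X_empty | [x0 _]] := set_0Vmem [set: X].
  by split=> _; [exact: void_axioms | exact: void_SICDRU].
rewrite (SICDRUP x0 p T_gt0).
split=> [[f [f_dist p_eq]] | [p_marg [q [p_moebius q_ge0]] p_csi]].
  exact: necessity f_dist p_eq.
exact: (sufficiency x0 T_gt0 p_rjcr p_marg p_moebius q_ge0 p_csi).
Qed.
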